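(* Let $q$ be an odd prime power, let $n, t$ be positive integers, and let $n \ge m \ge k \ge 0$ be integers. Let $\mathcal{T}_{m,k}$ be the number of pairs $(M,C)$ with $M \in M_{n\times t}(\mathbb{F}_q)$ (the $n\times t$ matrices over $\mathbb{F}_q$) and $C \in M_n(\mathbb{F}_q)$ (the $n \times n$ matrices over $\mathbb{F}_q$) such that $\mathrm{rank}(M) = m$, $\mathrm{rank}(C) = k$, and the matrix equation $MZ = C$ has a solution $Z \in M_{t\times n}(\mathbb{F}_q)$. Then \[ \mathcal{T}_{m,k} \ll q^{nm + m(t-m) + mk + k(n-k)}. \]
   Context: The notation $X \ll Y$ means $X \le C\,Y$ for some positive constant $C$ independent of $q$ (depending only on $n, t, m, k$). *)

From HB Require Import structures.
From mathcomp Require Import all_boot all_order all_algebra.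
Set Implicit Arguments. Unset Strict Implicit. Unset Printing Implicit Defensive.
Import Order.TTheory GRing.Theory Num.Theory.

Definition T_count (F : finFieldType) (n t m k : nat) : nat :=
  #|[set p : 'M[F]_(n, t) * 'M[F]_n |
      [&& \rank p.1 == m, \rank p.2 == k &
          [exists Z : 'M[F]_(t, n), (p.1 *m Z == p.2)%R]]]|.

(* exponent nm + m(t-m) + mk + k(n-k), computed in int (no truncation) *)
Definition T_exp (n t m k : nat) : int :=
  (n%:Z * m%:Z + m%:Z * (t%:Z - m%:Z) + m%:Z * k%:Z + k%:Z * (n%:Z - k%:Z))%R.

(* Solvability of [M Z = C] says that the rows of [C^T] lie in the row space
   of [M^T].  Matrices with N rows, rank r and rows in a fixed space of
   dimension d number at most [2^N q^(r(N+d-r))]: adding a top row either keeps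
   the rank, and then the row lies in the current row space (q^r choices), or
   raises it by one, and then it only has to lie in the ambient space (q^d
   choices).  Applied with (N, r, d) = (n, m, t) to M and (n, k, m) to C^T, the
   exponents add up to nm + m(t-m) + mk + k(n-k). *)

From mathcomp Require Import all_boot all_order all_algebra.
From mathcomp Require Import zify ring.
Import GRing.Theory Num.Theory.
Set Implicit Arguments. Unset Strict Implicit. Unset Printing Implicit Defensive.

Lemma card_set_pair (T1 T2 : finType) (P : pred (T1 * T2)) :
  #|[set p | P p]| = \sum_(x : T1) #|[set y | P (x, y)]|.
Proof.
rewrite -sum1dep_card (eq_bigl (fun p => P (p.1, p.2))); last by case.
rewrite -(pair_big_dep predT (fun x y => P (x, y)) (fun _ _ => 1%N)) /=.
by apply: eq_bigr => x _; rewrite sum1dep_card.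
Qed.

Lemma sum_mem_mul (T : finType) (S : {pred T}) K :
  \sum_(x : T) (x \in S) * K = #|S| * K.
Proof.
rewrite -sum_nat_const [RHS]big_mkcond; apply: eq_bigr => x _.
by case: (x \in S); rewrite ?mul1n.
Qed.

Lemma exp_rank_step N d r : 0 < r -> r <= N.+1 -> r <= d ->
  (r * (N + d - r) + r = r * (N.+1 + d - r)) /\
  (r.-1 * (N + d - r.-1) + d <= r * (N.+1 + d - r)).
Proof.
case: r => // s _ sN sd; split; first by rewrite -mulnSr; congr (_ * _); lia.
have -> : N + d - s = N.+1 + d - s.+1 by lia.
by rewrite mulSn addnC leq_add2r; lia.
Qed.

Section RankCounting.
Variable F : finFieldType.
Local Notation q := #|F|.

Lemma card_row_submx c m (U : 'M[F]_(m, c)) :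
  #|[set v : 'rV[F]_c | (v <= U)%MS]| = q ^ \rank U.
Proof.
have -> : [set v : 'rV_c | (v <= U)%MS] =
          [set (u *m row_base U)%R | u in [set: 'rV_(\rank U)]].
  apply/setP => v; rewrite inE -(eq_row_base U).
  by apply/submxP/imsetP => [[u ->]|[u _ ->]]; exists u.
rewrite card_imset ?cardsT ?card_mx ?mul1n //.
exact: row_free_inj (row_base_free U).
Qed.

Lemma mxrank_col_mx_row c N (v : 'rV[F]_c) (A : 'M[F]_(N, c)) :
  \rank A <= \rank (col_mx v A) <= (\rank A).+1.
Proof.
rewrite -(addsmxE v A) mxrankS ?addsmxSr //=.
case: (mxrank_adds_leqif v A) => le _; apply: leq_trans le _.
by rewrite addnC -[(\rank A).+1]addn1 leq_add2l rank_leq_row.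
Qed.

Definition rank_in N r c d (B : 'M[F]_(d, c)) : {set 'M[F]_(N, c)} :=
  [set A | (\rank A == r) && (A <= B)%MS].

Lemma rank_in_eq0 N r c d (B : 'M[F]_(d, c)) :
  minn N (\rank B) < r -> rank_in N r B = set0.
Proof.
move=> lt_r; apply/setP => A; rewrite !inE; apply/negbTE/andP => [[/eqP rA AB]].
by move: (rank_leq_row A) (mxrankS AB); lia.
Qed.

Lemma rank_in0 N c d (B : 'M[F]_(d, c)) : rank_in N 0 B \subset [set 0%R].
Proof. by apply/subsetP => A; rewrite !inE mxrank_eq0 => /andP []. Qed.

Lemma card_col_mx_rank_in N r c d (B : 'M[F]_(d, c)) (A : 'M[F]_(N, c)) : 0 < r ->
  #|[set v : 'rV[F]_c | col_mx v A \in rank_in (1 + N) r B]| <=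
  (A \in rank_in N r B) * q ^ r + (A \in rank_in N r.-1 B) * q ^ \rank B.
Proof.
move=> r_gt0; rewrite !inE.
have [AB|nAB] := boolP (A <= B)%MS; last first.
  rewrite !andbF leqn0 cards_eq0; apply/eqP/setP => v.
  by rewrite !inE col_mx_sub (negbTE nAB) !andbF.
rewrite !andbT; have [rA|rA] := eqVneq (\rank A) r.
  apply: leq_trans (leq_addr _ _); rewrite mul1n -{2}rA -card_row_submx.
  apply/subset_leq_card/subsetP => v; rewrite !inE -(addsmxE v A) => /andP [/eqP rvA _].
  case: (mxrank_leqif_sup (addsmxSr v A)) => _; rewrite rvA rA eqxx => /esym.
  by rewrite addsmx_sub => /andP [].
have [rA1|rA1] := eqVneq (\rank A) r.-1.
  rewrite mul1n add0n -card_row_submx.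
  by apply/subset_leq_card/subsetP => v; rewrite !inE col_mx_sub => /and3P [].
rewrite leqn0 cards_eq0; apply/eqP/setP => v; rewrite !inE.
by apply/negbTE/andP => [[/eqP rvA _]]; move: (mxrank_col_mx_row v A); lia.
Qed.

Lemma card_rank_in_rec N r c d (B : 'M[F]_(d, c)) : 0 < r ->
  #|rank_in N.+1 r B| <=
  #|rank_in N r B| * q ^ r + #|rank_in N r.-1 B| * q ^ \rank B.
Proof.
move=> r_gt0.
pose stack (p : 'M[F]_(N, c) * 'rV[F]_c) : 'M[F]_(1 + N, c) := col_mx p.2 p.1.
have stack_bij : bijective stack.
  exists (fun X => (dsubmx X, usubmx X)) => [[A v]|X] /=.
    by rewrite /stack col_mxKu col_mxKd.
  by rewrite /stack vsubmxK.
rewrite -(on_card_preimset (f := stack) (R := rank_in (1 + N) r B)); last exact: onW_bij.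
rewrite (card_set_pair (fun p => stack p \in rank_in (1 + N) r B)).
rewrite -!sum_mem_mul -big_split /=.
by apply: leq_sum => A _; exact: card_col_mx_rank_in.
Qed.

Lemma card_rank_in N r c d (B : 'M[F]_(d, c)) :
  #|rank_in N r B| <= 2 ^ N * q ^ (r * (N + \rank B - r)).
Proof.
have q_gt0 : 0 < q by apply/card_gt0P; exists 0%R.
have card_rank_in0 M : #|rank_in M 0 B| <= 1.
  by rewrite -(cards1 (0 : 'M[F]_(M, c))%R) subset_leq_card ?rank_in0.
elim: N r => [|N IHN] [|r].
- exact: card_rank_in0.
- by rewrite rank_in_eq0 ?cards0 // min0n.
- by rewrite mul0n expn0 muln1 (leq_trans (card_rank_in0 _)) ?expn_gt0.
have [|] := ltnP (minn N.+1 (\rank B)) r.+1; first by move/rank_in_eq0 ->; rewrite cards0.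
rewrite leq_min => /andP [rN rB].
have [exp_old exp_new] := exp_rank_step (ltn0Sn r) rN rB.
apply: leq_trans (card_rank_in_rec _ _ (ltn0Sn r)) _.
rewrite (expnS 2) mul2n -addnn mulnDl leq_add //.
  by rewrite (leq_trans (leq_mul (IHN _) (leqnn _))) // -mulnA -expnD exp_old.
by rewrite (leq_trans (leq_mul (IHN _) (leqnn _))) // -mulnA -expnD leq_mul // leq_pexp2l.
Qed.

Lemma mulmx_solvableE n t p (M : 'M[F]_(n, t)) (C : 'M[F]_(n, p)) :
  [exists Z : 'M[F]_(t, p), (M *m Z == C)%R] = (C^T <= M^T)%MS%R.
Proof.
apply/existsP/submxP => [[Z /eqP <-]|[D DE]]; first by exists Z^T%R; rewrite trmx_mul.
by exists D^T%R; rewrite -(trmxK C) DE trmx_mul trmxK.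
Qed.

Lemma card_solvable_rank n t k (M : 'M[F]_(n, t)) :
  #|[set C : 'M[F]_n | (\rank C == k) && [exists Z : 'M[F]_(t, n), (M *m Z == C)%R]]|
  = #|rank_in n k M^T%R|.
Proof.
rewrite -(on_card_preimset (f := @trmx F n n) (R := rank_in n k M^T%R)); last first.
  by apply: onW_bij; exists trmx; apply: trmxK.
by apply: eq_card => C; rewrite !inE mxrank_tr mulmx_solvableE.
Qed.

Lemma T_count_le n t m k :
  T_count F n t m k <=
  (2 ^ n * q ^ (m * (n + t - m))) * (2 ^ n * q ^ (k * (n + m - k))).
Proof.
rewrite /T_count card_set_pair /=.
apply: (@leq_trans (\sum_(M : 'M[F]_(n, t))
   (M \in rank_in n m (1%:M : 'M[F]_t)%R) * (2 ^ n * q ^ (k * (n + m - k))))).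
  apply: leq_sum => M _; rewrite inE submx1 andbT.
  have [rM|_] := eqVneq (\rank M) m; last first.
    by rewrite leqn0 cards_eq0; apply/eqP/setP => C; rewrite !inE.
  by rewrite mul1n card_solvable_rank (leq_trans (card_rank_in _ _ _)) // mxrank_tr rM.
by rewrite sum_mem_mul leq_mul // (leq_trans (card_rank_in _ _ _)) // mxrank1.
Qed.

End RankCounting.

Local Open Scope ring_scope.

Lemma T_expE n t m k : (k <= m)%N -> (m <= n)%N ->
  T_exp n t m k = (m * (n + t - m) + k * (n + m - k))%N :> int.
Proof.
move=> km mn; rewrite /T_exp PoszD !PoszM -!subzn ?PoszD; [ring | lia | lia].
Qed.

Theorem lemma3p3 (n t m k : nat) :
  (0 < n)%N -> (0 < t)%N -> (k <= m)%N -> (m <= n)%N ->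
  exists C : rat, 0 < C /\
    forall F : finFieldType, odd #|F| ->
      ((T_count F n t m k)%:R : rat) <= C * (#|F|%:R : rat) ^ (T_exp n t m k).
Proof.
move=> _ _ km mn; exists (4 ^ n)%:R; split; first by rewrite ltr0n expn_gt0.
move=> F _; rewrite T_expE // -exprnP -natrX -natrM ler_nat.
by rewrite (leq_trans (T_count_le F n t m k)) // mulnACA -expnMn -expnD.
Qed.
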